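(* Let $k\in\mathbb{Z}^+$, let $1<\gamma<k$, and let $(a_n)_{n=1}^\infty$ be a sequence of non-negative real numbers such that for all $n,m\in\mathbb{Z}^+$: (i) $a_{n+m}\leq a_na_m$, and (ii) $a_{kn}\leq a_n^{\gamma}$. Then for every $\tau>\log_k(\gamma)$ one has $a_n=O(e^{n^\tau})$ as $n\to\infty$. *)

From Stdlib Require Import Reals Lra Lia.
Open Scope R_scope.

(* Real power x^y for x >= 0 with the usual convention 0^y = 0 for y <> 0
   (and 0^0 = 1).  Stdlib's Rpower 0 y = exp (y * ln 0) = 1 would be wrong. *)
Definition rpow (x y : R) : R :=
  if Req_EM_T x 0 then (if Req_EM_T y 0 then 1 else 0) else Rpower x y.

(* Put s = log_k gamma, so that k^s = gamma, and b(n) = exp (E (gamma n^s - 1)).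
   If kq <= n then gamma q^s = (kq)^s <= n^s, hence b(q)^gamma <= b(n) / exp (E (gamma - 1)).
   Once exp (E (gamma - 1)) bounds a(1), ..., a(k-1), writing n = kq + r with r < k and
   using a(kq + r) <= a(q)^gamma a(r) gives a(n) <= b(n) by strong induction on n.
   Since s < tau, b(n) <= exp (n^tau) for all large n. *)
From Stdlib Require Import Reals Lra Lia.
Open Scope R_scope.

Lemma exp_le (x y : R) : x <= y -> exp x <= exp y.
Proof.
  intros [Hlt | ->]; [now apply Rlt_le, exp_increasing | apply Rle_refl].
Qed.

Lemma Rlog_gt_0 (b x : R) : 1 < b -> 1 < x -> 0 < Rlog b x.
Proof.
  intros Hb Hx; unfold Rlog.
  apply Rdiv_lt_0_compat; rewrite <- ln_1; apply ln_increasing; lra.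
Qed.

Lemma Rpower_ge_1 (x s : R) : 1 <= x -> 0 <= s -> 1 <= Rpower x s.
Proof.
  intros Hx Hs; rewrite <- (Rpower_O x) by lra; now apply Rle_Rpower.
Qed.

Lemma rpow_le_exp (x u g : R) :
  0 <= x -> x <= exp u -> 0 < g -> rpow x g <= exp (g * u).
Proof.
  intros Hx Hxu Hg; unfold rpow.
  destruct (Req_EM_T x 0) as [_ | Hx0].
  - destruct (Req_EM_T g 0); [lra | apply Rlt_le, exp_pos].
  - apply Rle_trans with (Rpower (exp u) g).
    + apply Rle_Rpower_l; lra.
    + unfold Rpower; rewrite ln_exp, Rmult_comm; apply Rle_refl.
Qed.

Lemma finite_upper_bound (f : nat -> R) (K : nat) :
  exists A, 0 <= A /\ forall i, (i <= K)%nat -> f i <= A.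
Proof.
  induction K as [| K [A [HA0 HA]]].
  - exists (Rmax 0 (f 0%nat)); split; [apply Rmax_l |].
    intros i Hi; replace i with 0%nat by lia; apply Rmax_r.
  - exists (Rmax A (f (S K))); split; [apply Rle_trans with A; [lra | apply Rmax_l] |].
    intros i Hi; destruct (Nat.eq_dec i (S K)) as [-> | Hne]; [apply Rmax_r |].
    apply Rle_trans with A; [apply HA; lia | apply Rmax_l].
Qed.

Lemma Rpower_dominates (c s tau : R) :
  0 <= c -> s < tau ->
  exists N : nat, forall n : nat, (N <= n)%nat ->
    c * Rpower (INR n) s <= Rpower (INR n) tau.
Proof.
  intros Hc Hst.
  set (x0 := Rpower (c + 1) (/ (tau - s))).
  destruct (INR_unbounded x0) as [N HN].
  exists N; intros n Hn.
  assert (Hx0 : 0 < x0) by apply exp_pos.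
  assert (Hx0n : x0 <= INR n) by (pose proof (le_INR N n Hn); lra).
  assert (Hbig : c + 1 <= Rpower (INR n) (tau - s)).
  { replace (c + 1) with (Rpower x0 (tau - s)).
    - apply Rle_Rpower_l; lra.
    - unfold x0; rewrite Rpower_mult.
      replace (/ (tau - s) * (tau - s)) with 1 by (field; lra).
      apply Rpower_1; lra. }
  replace tau with ((tau - s) + s) by ring; rewrite Rpower_plus.
  assert (0 < Rpower (INR n) s) by apply exp_pos.
  nra.
Qed.

Section GrowthBound.

Variables (k : nat) (gamma s E : R) (a : nat -> R).
Hypothesis hgamma : 1 < gamma < INR k.
Hypothesis hs : 0 <= s.
Hypothesis hks : Rpower (INR k) s = gamma.
Hypothesis hE : 0 <= E.
Hypothesis hnonneg : forall n : nat, (1 <= n)%nat -> 0 <= a n.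
Hypothesis hsub :
  forall n m : nat, (1 <= n)%nat -> (1 <= m)%nat -> a (n + m)%nat <= a n * a m.
Hypothesis hpow : forall n : nat, (1 <= n)%nat -> a (k * n)%nat <= rpow (a n) gamma.
Hypothesis hsmall : forall r : nat, (1 <= r < k)%nat -> a r <= exp (E * (gamma - 1)).

Lemma k_ge_2 : (2 <= k)%nat.
Proof.
  destruct k as [| [| k']]; simpl in hgamma; [lra | lra | lia].
Qed.

Lemma gamma_mul_Rpower_le (q n : nat) :
  (1 <= q)%nat -> (k * q <= n)%nat ->
  gamma * Rpower (INR q) s <= Rpower (INR n) s.
Proof.
  intros Hq Hqn.
  assert (HINRq : 0 < INR q) by (apply lt_0_INR; lia).
  rewrite <- hks, Rpower_mult_distr by lra.
  apply Rle_Rpower_l; [exact hs | split; [nra |]].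
  rewrite <- mult_INR; now apply le_INR.
Qed.

Lemma a_mul_k_le (q n : nat) :
  (1 <= q)%nat -> (k * q <= n)%nat ->
  a q <= exp (E * (gamma * Rpower (INR q) s - 1)) ->
  a (k * q)%nat
    <= exp (E * (gamma * Rpower (INR n) s - 1) - E * (gamma - 1)).
Proof.
  intros Hq Hqn Haq.
  apply Rle_trans with (rpow (a q) gamma); [now apply hpow |].
  apply Rle_trans with (exp (gamma * (E * (gamma * Rpower (INR q) s - 1)))).
  { apply rpow_le_exp; auto; lra. }
  apply exp_le.
  pose proof (gamma_mul_Rpower_le q n Hq Hqn).
  assert (0 <= E * gamma) by nra.
  nra.
Qed.

Lemma a_le_growth_bound (n : nat) :
  (1 <= n)%nat -> a n <= exp (E * (gamma * Rpower (INR n) s - 1)).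
Proof.
  induction n as [n IH] using Wf_nat.lt_wf_ind; intros Hn.
  destruct (Nat.lt_ge_cases n k) as [Hlt | Hge].
  - apply Rle_trans with (exp (E * (gamma - 1))); [apply hsmall; lia |].
    apply exp_le, Rmult_le_compat_l; [exact hE |].
    assert (1 <= Rpower (INR n) s).
    { apply Rpower_ge_1; [apply (le_INR 1); lia | exact hs]. }
    nra.
  - pose proof k_ge_2 as Hk.
    set (q := (n / k)%nat); set (r := (n mod k)%nat).
    assert (Hdiv : n = (k * q + r)%nat) by apply Nat.div_mod_eq.
    assert (Hq : (1 <= q)%nat) by (apply Nat.div_le_lower_bound; lia).
    assert (Hr : (r < k)%nat) by (apply Nat.mod_upper_bound; lia).
    assert (Hkq := a_mul_k_le q n Hq ltac:(lia) (IH q ltac:(apply Nat.div_lt; lia) Hq)).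
    assert (HEg : 0 <= E * (gamma - 1)) by nra.
    destruct (Nat.eq_dec r 0) as [Hr0 | Hr0].
    + replace n with (k * q)%nat at 1 by lia.
      apply Rle_trans with (1 := Hkq), exp_le; lra.
    + replace n with (k * q + r)%nat at 1 by lia.
      apply Rle_trans with (a (k * q)%nat * a r); [apply hsub; lia |].
      apply Rle_trans with
        (exp (E * (gamma * Rpower (INR n) s - 1) - E * (gamma - 1))
         * exp (E * (gamma - 1))).
      { apply Rmult_le_compat; [apply hnonneg; lia | apply hnonneg; lia | exact Hkq |].
        apply hsmall; lia. }
      rewrite <- exp_plus; apply exp_le; lra.
Qed.

End GrowthBound.

Theorem lemma3p4 (k : nat) (gamma : R) (a : nat -> R)
  (hk : (1 <= k)%nat)
  (hgamma : 1 < gamma < INR k)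
  (hnonneg : forall n : nat, (1 <= n)%nat -> 0 <= a n)
  (hsub : forall n m : nat, (1 <= n)%nat -> (1 <= m)%nat -> a (n + m)%nat <= a n * a m)
  (hpow : forall n : nat, (1 <= n)%nat -> a (k * n)%nat <= rpow (a n) gamma) :
  forall tau : R, ln gamma / ln (INR k) < tau ->
    exists (C : R) (N : nat), forall n : nat, (N <= n)%nat ->
      Rabs (a n) <= C * exp (Rpower (INR n) tau).
Proof.
  intros tau Htau.
  set (s := Rlog (INR k) gamma).
  assert (Hs : 0 <= s) by (apply Rlt_le, Rlog_gt_0; lra).
  assert (Hks : Rpower (INR k) s = gamma) by (apply Rpower_Rlog; lra).
  destruct (finite_upper_bound a k) as [A [HA0 HA]].
  set (E := A / (gamma - 1)).
  assert (HE : 0 <= E) by (apply Rmult_le_pos; [lra | apply Rlt_le, Rinv_0_lt_compat; lra]).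
  assert (hsmall : forall r, (1 <= r < k)%nat -> a r <= exp (E * (gamma - 1))).
  { intros r Hr; replace (E * (gamma - 1)) with A by (unfold E; field; lra).
    pose proof (exp_ineq1_le A); pose proof (HA r ltac:(lia)); lra. }
  destruct (Rpower_dominates (E * gamma) s tau ltac:(nra) Htau) as [N HN].
  exists 1, (Nat.max 1 N); intros n Hn.
  rewrite Rabs_right, Rmult_1_l by (apply Rle_ge, hnonneg; lia).
  apply Rle_trans with (1 := a_le_growth_bound k gamma s E a hgamma Hs Hks HE hnonneg hsub
                               hpow hsmall n ltac:(lia)).
  apply exp_le.
  pose proof (HN n ltac:(lia)).
  nra.
Qed.
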